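(* Fix $d \in \mathbb{N}$, $0<\eta \le \tfrac12$ and $j \in \mathbb{N}$. Let $\mathcal{C} \subset \mathcal{D}_j$ and let $\mathcal{C} = \mathcal{C}_1 \cup \dots \cup \mathcal{C}_d$ be a fixed $(\eta,d)$-homogeneous colouring of $\mathcal{C}$. Let $\mathcal{U} \subset \mathcal{D}_j$ with $\mathcal{U} \cap \mathcal{C} = \emptyset$ be such that the pair $(\mathcal{C},\mathcal{U})$ is $d$-previsible. Then there is a colouring $\mathcal{U} = \mathcal{U}_1 \cup \dots \cup \mathcal{U}_d$ of $\mathcal{U}$ such that $\{\mathcal{H}_i = \mathcal{C}_i \cup \mathcal{U}_i : 1 \le i \le d\}$ is an $(\eta,d)$-homogeneous colouring of $\mathcal{H} = \mathcal{C} \cup \mathcal{U}$.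
   Context: $\mathcal{D}$ denotes the collection of dyadic subintervals of $[0,1]$ and $\mathcal{D}_j = \{I \in \mathcal{D} : |I| = 2^{-j}\}$. For a collection $\mathcal{A}$ of dyadic intervals and $L \in \mathcal{D}$, write $\mathcal{A} \cap L = \{I \in \mathcal{A} : I \subset L\}$, and $|\mathcal{A}|$ for the cardinality of $\mathcal{A}$. A colouring of a collection $\mathcal{A}$ with $d$ colours is a decomposition $\mathcal{A} = \mathcal{A}_1 \cup \dots \cup \mathcal{A}_d$ into pairwise disjoint (possibly empty) subcollections ($\mathcal{A}_i$ = intervals of colour $i$). For $\mathcal{A} \subset \mathcal{D}_j$, $d \in \mathbb{N}$, $0<\eta\le \tfrac12$, such a decomposition is called an $(\eta,d)$-homogeneous colouring if for every $L \in \mathcal{D}$ with $|L| \ge 2^{-j}$ one of the following holds: either $|\mathcal{A} \cap L| > d$ and $\eta \max_{1\le i\le d} |\mathcal{A}_i \cap L| \le \min_{1 \le i \le d} |\mathcal{A}_i \cap L|$; or $|\mathcal{A} \cap L| \le d$ and $|\mathcal{A}_i \cap L| \le 1$ for each $1 \le i \le d$. For disjoint $\mathcal{C}, \mathcal{U} \subset \mathcal{D}_j$ and $d \in \mathbb{N}$, the pair $(\mathcal{C},\mathcal{U})$ is called $d$-previsible if for every $L \in \mathcal{D}$ with $|L| \ge 2^{-(j-1)}$ and its two dyadic children $L', L''$ (i.e. $L', L'' \in \mathcal{D}$, $L = L' \cup L''$, $|L'| = |L''| = |L|/2$, in either order), the conditions $|(\mathcal{U}\cup\mathcal{C}) \cap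 L'| < d$ and $|(\mathcal{U}\cup\mathcal{C}) \cap L''| \ge d$ imply $\mathcal{U} \cap L'' = \emptyset$ or $\mathcal{C} \cap L'' = \emptyset$. *)

From mathcomp Require Import all_boot all_order all_algebra.
Set Implicit Arguments. Unset Strict Implicit. Unset Printing Implicit Defensive.
Import Order.TTheory GRing.Theory Num.Theory.
Local Open Scope nat_scope.

(* Dyadic intervals of [0,1]: the interval of level k with index m (m < 2^k)
   is [m 2^-k, (m+1) 2^-k].  A collection A ⊂ D_j is a set of indices
   in 'I_(2^j).  For L of level k <= j and index m, an interval I in D_j
   with index i satisfies I ⊂ L  iff  i %/ 2^(j-k) = m. *)

Definition dyrestr (j : nat) (A : {set 'I_(2^j)}) (k m : nat) : {set 'I_(2^j)} :=
  [set I in A | (nat_of_ord I) %/ 2 ^ (j - k) == m].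

Definition colouring (j d : nat) (A : {set 'I_(2^j)})
    (Acol : 'I_d -> {set 'I_(2^j)}) : Prop :=
  (forall i i' : 'I_d, i != i' -> Acol i :&: Acol i' = set0) /\
  \bigcup_(i < d) Acol i = A.

Definition maxcount (j d : nat) (Acol : 'I_d -> {set 'I_(2^j)}) (k m : nat) : nat :=
  \max_(i < d) #|dyrestr (Acol i) k m|.

(* minimum over i < d (for d >= 1 the default value 2^j, an upper bound of
   every cardinality involved, is irrelevant) *)
Definition mincount (j d : nat) (Acol : 'I_d -> {set 'I_(2^j)}) (k m : nat) : nat :=
  \big[minn/2 ^ j]_(i < d) #|dyrestr (Acol i) k m|.

Definition homogeneous_colouring (R : realFieldType) (j d : nat) (eta : R)
    (A : {set 'I_(2^j)}) (Acol : 'I_d -> {set 'I_(2^j)}) : Prop :=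
  colouring A Acol /\
  forall k m : nat, k <= j -> m < 2 ^ k ->
    (d < #|dyrestr A k m| /\
       (eta * (maxcount Acol k m)%:R <= (mincount Acol k m)%:R)%R)
    \/ (#|dyrestr A k m| <= d /\ forall i : 'I_d, #|dyrestr (Acol i) k m| <= 1).

Definition previsible (j d : nat) (C U : {set 'I_(2^j)}) : Prop :=
  forall k m : nat, k < j -> m < 2 ^ k ->
    forall m' m'' : nat,
      (m' = m.*2 /\ m'' = m.*2.+1) \/ (m' = m.*2.+1 /\ m'' = m.*2) ->
      #|dyrestr (U :|: C) k.+1 m'| < d ->
      d <= #|dyrestr (U :|: C) k.+1 m''| ->
      dyrestr U k.+1 m'' = set0 \/ dyrestr C k.+1 m'' = set0.

(* The colouring of U is built bottom-up along the dyadic tree: by induction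
   on the height of a node we colour the intervals of U below it so that every
   subnode is homogeneous.  A node holding at most d intervals is coloured
   injectively with colours that C does not use there.  A larger node is glued
   from its two children: counts stay balanced under sums, and when one child
   is small its intervals go to the colours that are lightest in the other
   child, which keeps the counts balanced because eta <= 1/2.  When a small
   child holds fewer than d intervals, previsibility leaves two cases: either
   the other child contains no interval of U, so its counts are those of C, or
   it contains no interval of C, so its colouring may be permuted freely. *)

From mathcomp Require Import all_boot all_order all_algebra.
From mathcomp Require Import fingroup perm.
From mathcomp Require Import zify lra.
Import Order.TTheory GRing.Theory Num.Theory.
Set Implicit Arguments. Unset Strict Implicit.

Lemma lightest_subset (I : finType) (w : I -> nat) (A : {set I}) k : k <= #|A| ->
  exists S : {set I}, [/\ S \subset A, #|S| = k &
    forall i i', i \in S -> i' \in A :\: S -> w i <= w i'].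
Proof.
elim: k => [|k IH] leA.
  by exists set0; split; rewrite ?sub0set ?cards0 // => i i'; rewrite inE.
have [S [SA cardS lightS]] := IH (ltnW leA).
have : A :\: S != set0.
  by rewrite -card_gt0 cardsD (setIidPr SA) cardS subn_gt0.
case/set0Pn => i0 /(arg_minnP w) [a aAS amin].
have /setDP [aA aS] := aAS.
exists (a |: S); split.
- by rewrite subUset sub1set aA SA.
- by rewrite cardsU1 aS cardS.
- move=> i i' /setU1P [-> | iS] /setDP [i'A]; rewrite in_setU1 negb_or => /andP [_ i'S].
    by apply: amin; apply/setDP.
  by apply: lightS; rewrite // inE i'S i'A.
Qed.

Lemma exists_inj_imset (T I : finType) (i0 : I) (X : {set T}) (S : {set I}) :
  #|X| = #|S| -> exists f : T -> I, {in X &, injective f} /\ f @: X = S.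
Proof.
move=> cardXS; pose f x := nth i0 (enum S) (index x (enum X)).
have ltX x : x \in X -> index x (enum X) < size (enum S).
  by move=> xX; rewrite -cardE -cardXS cardE index_mem mem_enum.
have f_inj : {in X &, injective f}.
  move=> x y xX yX /eqP; rewrite /f nth_uniq ?enum_uniq ?ltX // => /eqP eq_xy.
  by rewrite -(nth_index x (_ : x \in enum X)) ?mem_enum // eq_xy nth_index ?mem_enum.
exists f; split => //; apply/eqP; rewrite eqEcard card_in_imset // cardXS leqnn andbT.
by apply/subsetP => _ /imsetP [x xX ->]; rewrite -mem_enum mem_nth ?ltX.
Qed.

Lemma exists_perm_imset (I : finType) (A B : {set I}) :
  #|A| = #|B| -> exists s : {perm I}, s @: A = B.
Proof.
move=> cardAB; case: (set_0Vmem A) => [A0 | [i0 _]].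
  by exists 1%g; rewrite imset_perm1 A0; apply/esym/eqP; rewrite -cards_eq0 -cardAB A0 cards0.
have cardCAB : #|~: A| = #|~: B| by apply/eqP; rewrite -(eqn_add2l #|A|) cardsC cardAB cardsC.
have [f [f_inj fA]] := exists_inj_imset i0 cardAB.
have [g [g_inj gA]] := exists_inj_imset i0 cardCAB.
have fB x : x \in A -> f x \in B by move=> xA; rewrite -fA imset_f.
have gB x : x \notin A -> g x \notin B.
  by move=> xA; rewrite -in_setC -gA imset_f // inE.
pose h x := if x \in A then f x else g x.
have h_inj : injective h.
  move=> x y; rewrite /h; case: ifPn => xA; case: ifPn => yA.
  - exact: f_inj.
  - by move=> fg; move: (fB x xA); rewrite fg (negbTE (gB y yA)).
  - by move=> gf; move: (fB y yA); rewrite -gf (negbTE (gB x xA)).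
  - by apply: g_inj; rewrite inE.
exists (perm h_inj); rewrite -fA; apply: eq_in_imset => x xA.
by rewrite permE /h xA.
Qed.

Lemma card_fibre_inj (T I : finType) (f : T -> I) (X : {set T}) i :
  {in X &, injective f} -> #|[set x in X | f x == i]| = (i \in f @: X).
Proof.
move=> f_inj; case: (boolP (i \in f @: X)) => [/imsetP [x xX ->] | fXi].
  rewrite /= -(cards1 x); apply: eq_card => y; rewrite !inE.
  by apply/andP/eqP => [[yX /eqP /f_inj] | ->]; [apply | ].
apply/eqP; rewrite cards_eq0; apply/eqP/setP => y; rewrite !inE.
by apply/andP => [[yX /eqP fy]]; move: fXi; rewrite -fy imset_f.
Qed.

Lemma sum_le1_card (I : finType) (v : I -> nat) : (forall i, v i <= 1) ->
  \sum_i v i = #|[set i | v i == 1]|.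
Proof.
move=> v_le1; rewrite -sum1_card [RHS]big_mkcond /=; apply: eq_bigr => i _.
by rewrite inE; have := v_le1 i; case: (v i) => [|[|]].
Qed.

Lemma sum_le1_lt_card (I : finType) (v : I -> nat) i0 :
  (forall i, v i <= 1) -> v i0 = 0 -> \sum_i v i < #|I|.
Proof.
move=> v_le1 vi0; rewrite (bigD1 i0) //= vi0 add0n.
apply: (@leq_ltn_trans (\sum_(i | i != i0) 1)); first exact: leq_sum.
by rewrite sum1_card cardC1 (cardD1 i0).
Qed.

Lemma bigmin_le (I : eqType) (r : seq I) (x : nat) (F : I -> nat) i :
  i \in r -> \big[minn/x]_(k <- r) F k <= F i.
Proof.
elim: r => [//|a r IH]; rewrite inE big_cons => /predU1P [-> | /IH]; first exact: geq_minl.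
exact/leq_trans/geq_minr.
Qed.

Section Balanced.
Variables (R : realFieldType) (eta : R) (I : finType).
Hypotheses (eta_gt0 : (0 < eta)%R) (eta_le_half : (eta <= 1 / 2)%R).

Definition balanced (v : I -> nat) := forall i i', (eta * (v i)%:R <= (v i')%:R)%R.

Lemma eta_le1 : (eta <= 1)%R.
Proof. by apply: le_trans eta_le_half _; lra. Qed.

Lemma balanced_comp (v : I -> nat) (s : I -> I) : balanced v -> balanced (v \o s).
Proof. by move=> bal i i'; apply: bal. Qed.

Lemma balancedD (x y : I -> nat) :
  balanced x -> balanced y -> balanced (fun i => x i + y i).
Proof. by move=> balx baly i i'; rewrite !natrD mulrDr lerD. Qed.

Lemma balanced_add1 (y : I -> nat) : balanced y -> balanced (fun i => 1 + y i).
Proof. by move=> baly i i'; rewrite !natrD mulrDr mulr1 lerD // eta_le1. Qed.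

Lemma balanced_gt0 (v : I -> nat) : 0 < \sum_i v i -> balanced v -> forall i, 0 < v i.
Proof.
move=> sum_gt0 bal i; have /forall_inPn [i0 _ vi0] : ~~ [forall (i0 | true), v i0 == 0].
  by rewrite -sum_nat_eq0 -lt0n.
rewrite -(ltr_nat R); apply: lt_le_trans (bal i0 i).
by rewrite mulr_gt0 // ltr0n lt0n.
Qed.

Lemma balanced_le2 (v : I -> nat) : (forall i, 0 < v i <= 2) -> balanced v.
Proof.
move=> v12 i i'; have /andP [_ vi2] := v12 i; have /andP [vi'1 _] := v12 i'.
apply: (@le_trans _ _ (eta * 2%:R)%R); first by apply: ler_wpM2l; [exact: ltW | rewrite ler_nat].
apply: (@le_trans _ _ 1%R); last by rewrite ler1n.
by rewrite -(@ler_pdivlMr _ 2) ?ltr0n // mul1r.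
Qed.

Lemma eta_mul_succ_le (a b : nat) : a <= b -> 0 < b -> (eta * a.+1%:R <= b%:R)%R.
Proof.
move=> le_ab b_gt0; have : (a.+1%:R <= b.+1%:R :> R)%R by rewrite ler_nat.
have : (1 <= b%:R :> R)%R by rewrite ler1n.
have : (eta * a.+1%:R <= 1 / 2 * a.+1%:R)%R by rewrite ler_wpM2r.
rewrite -[a.+1]addn1 -[b.+1]addn1 !natrD; lra.
Qed.

(* A colour [i] receiving an item has [y i <= y i'] for every colour [i'] left
   empty by [x + s], and then [eta * (y i + 1) <= y i'] as [eta <= 1/2] and
   [0 < y i']. *)
Lemma balancedD_light (x s y : I -> nat) :
  (forall i, s i <= 1) -> (forall i, s i = 1 -> x i = 0) ->
  (forall i i', s i = 1 -> x i' = 0 -> s i' = 0 -> y i <= y i') ->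
  balanced (fun i => x i + y i) -> balanced y -> (forall i, 0 < y i) ->
  balanced (fun i => x i + s i + y i).
Proof.
move=> s_le1 sx0 light balxy baly y_gt0 i i' /=.
have [si0 | si_gt0] := leqP (s i) 0.
  have -> : s i = 0 by lia.
  by rewrite addn0; apply: le_trans (balxy i i') _; rewrite ler_nat; lia.
have si1 : s i = 1 by have := s_le1 i; lia.
rewrite si1 (sx0 i si1) add0n add1n.
have [xsi'0 | xsi'_gt0] := leqP (x i' + s i') 0.
  have xi'0 : x i' = 0 by lia.
  have si'0 : s i' = 0 by lia.
  by rewrite xi'0 si'0; apply: eta_mul_succ_le; [exact: light | exact: y_gt0].
apply: (@le_trans _ _ (y i').+1%:R%R); last by rewrite ler_nat; lia.
by rewrite -[(y i).+1]addn1 -[(y i').+1]addn1 !natrD mulrDr mulr1 lerD // eta_le1.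
Qed.

Lemma balanced_max_min (x : nat) (v : I -> nat) : 0 < #|I| -> (forall i, v i <= x) ->
  (eta * (\max_i v i)%:R <= (\big[minn/x]_i v i)%:R)%R <-> balanced v.
Proof.
move=> I_gt0 v_le; split => [maxmin i i' | bal].
  apply: le_trans (le_trans maxmin _).
    by apply: ler_wpM2l; [exact: ltW | rewrite ler_nat leq_bigmax].
  by rewrite ler_nat bigmin_le ?mem_index_enum.
have [i0 ->] := bigop.eq_bigmax v I_gt0.
elim/big_ind: _ => // [|a b]; last by rewrite /minn; case: ifP.
by apply: le_trans (bal i0 i0) _; rewrite ler_nat.
Qed.

End Balanced.

Section Colourings.
Variables (j d : nat).
Local Notation T := 'I_(2^j).

Lemma colouring_sub (A : {set T}) (F : 'I_d -> {set T}) i : colouring A F -> F i \subset A.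
Proof. by case=> _ <-; apply: bigcup_sup. Qed.

Lemma colouring_sum_card (A X : {set T}) (F : 'I_d -> {set T}) :
  colouring A F -> \sum_i #|F i :&: X| = #|A :&: X|.
Proof.
case=> disjF <-.
have card_sum (Y : {set T}) : #|Y| = \sum_x (x \in Y).
  by rewrite -sum1_card big_mkcond; apply: eq_bigr => x _; case: (x \in Y).
under eq_bigr => i _ do rewrite card_sum.
rewrite exchange_big card_sum; apply: eq_bigr => x _ /=.
rewrite [in RHS]inE; case: (boolP (x \in X)) => xX; last first.
  by rewrite andbF big1 // => i _; rewrite inE (negbTE xX) andbF.
rewrite andbT; case: (boolP (x \in \bigcup_i F i)) => [/bigcupP [i0 _ xi0] | xF].
  rewrite (bigD1 i0) //= big1 => [|i ne]; first by rewrite inE xi0 xX.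
  rewrite inE xX andbT; case: (boolP (x \in F i)) => // xi.
  by move/setP/(_ x): (disjF _ _ ne); rewrite !inE xi xi0.
rewrite big1 // => i _; rewrite inE; case: (boolP (x \in F i)) => //= xi.
by case/bigcupP: xF; exists i.
Qed.

Lemma colouring_fibres (A : {set T}) (f : T -> 'I_d) :
  colouring A (fun i => [set x in A | f x == i]).
Proof.
split=> [i i' ne | ].
  apply/setP => x; rewrite !inE; apply/negbTE; apply: contra ne.
  by case/andP => /andP [_ /eqP <-] /andP [_ /eqP ->].
apply/setP => x; apply/bigcupP/idP => [[i _] | xA]; first by rewrite inE => /andP [].
by exists (f x); rewrite // inE xA /=.
Qed.

Lemma colouringU (A B : {set T}) (F G : 'I_d -> {set T}) :
  colouring A F -> colouring B G -> A :&: B = set0 ->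
  colouring (A :|: B) (fun i => F i :|: G i).
Proof.
move=> colF colG AB0.
have FG0 i i' : F i :&: G i' = set0.
  by apply/eqP; rewrite -subset0 -AB0 setISS ?(colouring_sub i colF) ?(colouring_sub i' colG).
case: colF colG => [disjF <-] [disjG <-]; split; last by rewrite -big_split.
move=> i i' ne; rewrite setIUl !setIUr disjF // disjG // FG0 setIC FG0.
by rewrite !set0U.
Qed.

Definition dnode (k m : nat) : {set T} := [set x : T | x %/ 2 ^ (j - k) == m].

Lemma dyrestrE (A : {set T}) k m : dyrestr A k m = A :&: dnode k m.
Proof. by apply/setP => x; rewrite !inE. Qed.

Lemma card_dnode_leaf m : #|dnode j m| <= 1.
Proof.
apply/card_le1_eqP => x y; rewrite !inE subnn expn0 !divn1 => /eqP x_m /eqP y_m.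
by apply: val_inj; rewrite /= x_m y_m.
Qed.

Lemma dnode_sub k k' m m' : k <= k' <= j -> m' %/ 2 ^ (k' - k) = m ->
  dnode k' m' \subset dnode k m.
Proof.
move=> /andP [le_kk' le_k'j] <-; apply/subsetP => x; rewrite !inE => /eqP <-.
by rewrite -divnMA -expnD; have -> : j - k' + (k' - k) = j - k by lia.
Qed.

Definition children (m a b : nat) :=
  (a = m.*2 /\ b = m.*2.+1) \/ (a = m.*2.+1 /\ b = m.*2).

Lemma children_sym m a b : children m a b -> children m b a.
Proof. by case=> -[-> ->]; [right | left]. Qed.

Lemma children_lt k m a b : m < 2 ^ k -> children m a b -> a < 2 ^ k.+1 /\ b < 2 ^ k.+1.
Proof. by rewrite expnS => lt_m [] [-> ->]; split; lia. Qed.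

Lemma dnode_children k m a b : k < j -> children m a b ->
  dnode k m = dnode k.+1 a :|: dnode k.+1 b.
Proof.
move=> lt_kj ch; apply/setP => x; rewrite !inE -(subnSK lt_kj) expnS mulnC divnMA.
by case: ch => -[-> ->]; [|rewrite orbC]; apply/eqP/orP; lia.
Qed.

Lemma dnode_children_disjoint k m a b x : children m a b ->
  x \in dnode k.+1 b -> x \notin dnode k.+1 a.
Proof. by case=> -[-> ->]; rewrite !inE => /eqP ->; lia. Qed.

Lemma card_dyrestr_children (A : {set T}) k m a b : k < j -> children m a b ->
  #|dyrestr A k m| = #|dyrestr A k.+1 a| + #|dyrestr A k.+1 b|.
Proof.
move=> lt_kj ch; rewrite !dyrestrE (dnode_children lt_kj ch) setIUr cardsU.
rewrite setIACA (_ : dnode k.+1 a :&: _ = set0) ?setI0 ?cards0 ?subn0 //.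
apply/setP => x; rewrite inE in_set0; apply/negbTE/negP => /andP [xa xb].
by move: xa; apply/negP; apply: dnode_children_disjoint ch xb.
Qed.

Lemma descendant_children k k' m a b m' : k < k' -> children m a b ->
  m' %/ 2 ^ (k' - k) = m ->
  m' %/ 2 ^ (k' - k.+1) = a \/ m' %/ 2 ^ (k' - k.+1) = b.
Proof.
move=> lt_kk' ch; rewrite -(subnSK lt_kk') expnS mulnC divnMA.
by case: ch => -[-> ->]; lia.
Qed.

End Colourings.

Section Homogeneous.
Variables (R : realFieldType) (eta : R) (j d : nat).
Hypotheses (d_gt0 : 0 < d) (eta_gt0 : (0 < eta)%R).
Local Notation T := 'I_(2^j).

Definition count (F : 'I_d -> {set T}) k m i := #|dyrestr (F i) k m|.

Definition hom_counts (v : 'I_d -> nat) (n : nat) :=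
  (d < n /\ balanced eta v) \/ (n <= d /\ forall i, v i <= 1).

Lemma hom_counts_eq (v v' : 'I_d -> nat) n : v =1 v' -> hom_counts v n -> hom_counts v' n.
Proof.
move=> eq_v [[big bal] | [small le1]]; [left | right]; split=> //.
  by move=> i i'; rewrite -!eq_v; apply: bal.
by move=> i; rewrite -eq_v.
Qed.

Lemma hom_counts_comp (v : 'I_d -> nat) (s : 'I_d -> 'I_d) n :
  hom_counts v n -> hom_counts (v \o s) n.
Proof.
case=> [[lt_dn bal] | [le_nd le1]]; [left | right]; split=> //.
  exact: balanced_comp.
by move=> i; apply: le1.
Qed.

Lemma homogeneous_colouringP (A : {set T}) (F : 'I_d -> {set T}) :
  homogeneous_colouring eta A F <->
  colouring A F /\
  forall k m, k <= j -> m < 2 ^ k -> hom_counts (count F k m) #|dyrestr A k m|.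
Proof.
have le_count k m i : count F k m i <= 2 ^ j.
  by rewrite -[2 ^ j]card_ord max_card.
have dI_gt0 : 0 < #|'I_d| by rewrite card_ord.
have maxminE k m := balanced_max_min eta_gt0 dI_gt0 (le_count k m).
rewrite /homogeneous_colouring /hom_counts /maxcount /mincount.
split=> -[colF homF]; split=> // k m le_kj lt_m.
  by case: (homF k m le_kj lt_m) => [[lt_dn /maxminE] | ]; [left | right].
by case: (homF k m le_kj lt_m) => [[lt_dn /maxminE] | ]; [left | right].
Qed.

End Homogeneous.

Section Extension.
Variables (R : realFieldType) (d : nat) (eta : R) (j : nat)
  (C : {set 'I_(2^j)}) (Ccol : 'I_d -> {set 'I_(2^j)}) (U : {set 'I_(2^j)}).
Hypotheses (d_gt0 : 0 < d) (eta_gt0 : (0 < eta)%R) (eta_le_half : (eta <= 1 / 2)%R)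
  (Chom : homogeneous_colouring eta C Ccol) (UC0 : U :&: C = set0)
  (prev : previsible d C U).
Local Notation T := 'I_(2^j).

Definition Ucol (f : T -> 'I_d) i := [set x in U | f x == i].
Definition Hcol f i := Ccol i :|: Ucol f i.
Definition total k m := #|dyrestr (C :|: U) k m|.

Definition hom_at f k m := hom_counts eta (count (Hcol f) k m) (total k m).

(* [m' %/ 2 ^ (k' - k) = m] says that the node (k', m') lies below (k, m). *)
Definition hom_below f k m :=
  forall k' m', k <= k' <= j -> m' %/ 2 ^ (k' - k) = m -> hom_at f k' m'.

Lemma Hcol_colouring f : colouring (C :|: U) (Hcol f).
Proof.
apply: colouringU; [exact: Chom.1 | exact: colouring_fibres | by rewrite setIC].
Qed.

Lemma count_Hcol f k m i : count (Hcol f) k m i = count Ccol k m i + count (Ucol f) k m i.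
Proof.
rewrite /count !dyrestrE setIUl cardsU (_ : Ccol i :&: _ :&: _ = set0) ?cards0 ?subn0 //.
apply/eqP; rewrite -subset0 -UC0 [U :&: C]setIC.
apply: subset_trans (setISS (subsetIl _ _) (subsetIl _ _)) _.
exact: setISS (colouring_sub i Chom.1) (colouring_sub i (colouring_fibres U f)).
Qed.

Lemma total_split k m : total k m = #|dyrestr C k m| + #|dyrestr U k m|.
Proof.
rewrite /total !dyrestrE setIUl cardsU (_ : C :&: _ :&: _ = set0) ?cards0 ?subn0 //.
by rewrite setIACA [C :&: U]setIC UC0 set0I.
Qed.

Lemma total_children k m a b : k < j -> children m a b ->
  total k m = total k.+1 a + total k.+1 b.
Proof. exact: card_dyrestr_children. Qed.

Lemma sum_count_Ccol k m : \sum_i count Ccol k m i = #|dyrestr C k m|.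
Proof.
rewrite dyrestrE -(colouring_sum_card _ Chom.1).
by apply: eq_bigr => i; rewrite /count dyrestrE.
Qed.

Lemma sum_count_Hcol f k m : \sum_i count (Hcol f) k m i = total k m.
Proof.
rewrite /total dyrestrE -(colouring_sum_card _ (Hcol_colouring f)).
by apply: eq_bigr => i; rewrite /count dyrestrE.
Qed.

Lemma hom_at_C k m : k <= j -> m < 2 ^ k ->
  hom_counts eta (count Ccol k m) #|dyrestr C k m|.
Proof. by case/(homogeneous_colouringP d_gt0 eta_gt0): Chom => _; apply. Qed.

Lemma count_Ccol_le1 k m : k <= j -> m < 2 ^ k -> total k m <= d ->
  forall i, count Ccol k m i <= 1.
Proof.
move=> le_kj lt_m small; case: (hom_at_C le_kj lt_m) => [[big _] | [_ //]].
by move: small; rewrite total_split; lia.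
Qed.

Lemma count_Ucol_inj f k m i : {in dyrestr U k m &, injective f} ->
  count (Ucol f) k m i = (i \in f @: dyrestr U k m).
Proof.
move=> f_inj; rewrite -card_fibre_inj //; apply: eq_card => x.
by rewrite !inE -!andbA; congr (_ && _); rewrite andbC.
Qed.

Lemma count_Ucol_eq0 f k m i : dyrestr U k m = set0 -> count (Ucol f) k m i = 0.
Proof.
move=> U0; apply/eqP; rewrite cards_eq0 -subset0 -U0 !dyrestrE setSI //.
exact: colouring_sub (colouring_fibres U f).
Qed.

Lemma count_Hcol_local f f' k m : {in dyrestr U k m, f =1 f'} ->
  count (Hcol f) k m =1 count (Hcol f') k m.
Proof.
move=> eq_f i; rewrite !count_Hcol; congr (_ + _); apply: eq_card => x; rewrite !inE.
have [xU | _] := boolP (x \in U); have [xN | _] := boolP (x %/ 2 ^ (j - k) == m);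
  rewrite ?andbF //= !andbT.
by rewrite eq_f // inE xU xN.
Qed.

Lemma hom_below_local f f' k m : {in dyrestr U k m, f =1 f'} ->
  hom_below f k m -> hom_below f' k m.
Proof.
move=> eq_f hom k' m' le_k' m'_m; apply: hom_counts_eq (hom k' m' le_k' m'_m).
apply: count_Hcol_local => x; rewrite !dyrestrE inE => /andP [xU xN]; apply: eq_f.
by rewrite dyrestrE inE xU (subsetP (dnode_sub le_k' m'_m)).
Qed.

Lemma hom_below_children f k m a b : k < j -> children m a b -> hom_at f k m ->
  hom_below f k.+1 a -> hom_below f k.+1 b -> hom_below f k m.
Proof.
move=> lt_kj ch hom_km hom_a hom_b k' m' /andP [le_kk' le_k'j] m'_m.
move: le_kk'; rewrite leq_eqVlt => /predU1P [eq_kk' | lt_kk'].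
  by move: m'_m; rewrite -eq_kk' subnn expn0 divn1 => ->.
by case: (descendant_children lt_kk' ch m'_m) => [m'_a | m'_b];
  [apply: hom_a | apply: hom_b]; rewrite ?lt_kk' ?le_k'j.
Qed.

Lemma hom_below_le1 f k m : total k m <= d -> (forall i, count (Hcol f) k m i <= 1) ->
  hom_below f k m.
Proof.
move=> small le1 k' m' le_k' m'_m; right; have sub := dnode_sub le_k' m'_m.
split; first by apply: leq_trans small; rewrite /total !dyrestrE subset_leq_card ?setIS.
by move=> i; apply: leq_trans (le1 i); rewrite /count !dyrestrE subset_leq_card ?setIS.
Qed.

Lemma hom_below_at f k m : k <= j -> hom_below f k m -> hom_at f k m.
Proof. by move=> le_kj; apply; rewrite ?leqnn // subnn expn0 divn1. Qed.

Lemma hom_below_balanced f k m : k <= j -> hom_below f k m -> d < total k m ->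
  balanced eta (count (Hcol f) k m).
Proof. by move=> le_kj /(hom_below_at le_kj) [[] | [small _] big] //; lia. Qed.

Lemma hom_below_count_le1 f k m : k <= j -> hom_below f k m -> total k m <= d ->
  forall i, count (Hcol f) k m i <= 1.
Proof. by move=> le_kj /(hom_below_at le_kj) [[big _] | [] //] small; lia. Qed.

Lemma small_node_colouring k m (w : 'I_d -> nat) : k <= j -> m < 2 ^ k -> total k m <= d ->
  exists f (S : {set 'I_d}),
    [/\ forall i, i \in S -> count Ccol k m i = 0,
        forall i, count (Ucol f) k m i = (i \in S),
        (forall i i', i \in S -> count Ccol k m i' = 0 -> i' \notin S -> w i <= w i') &
        hom_below f k m].
Proof.
move=> le_kj lt_m small; have C_le1 := count_Ccol_le1 le_kj lt_m small.
set F := [set i | count Ccol k m i == 0].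
have cardCF : #|dyrestr C k m| = #|~: F|.
  rewrite -sum_count_Ccol sum_le1_card //; apply: eq_card => i.
  by rewrite !inE; have := C_le1 i; case: (count Ccol k m i) => [|[|]].
have le_UF : #|dyrestr U k m| <= #|F|.
  by move: small (cardsC F); rewrite total_split cardCF card_ord; lia.
have [S [SF cardS light]] := lightest_subset w le_UF.
have [f [f_inj fU]] := exists_inj_imset (Ordinal d_gt0) (esym cardS).
have UfE i : count (Ucol f) k m i = (i \in S) by rewrite count_Ucol_inj // fU.
have SC0 i : i \in S -> count Ccol k m i = 0.
  by move=> /(subsetP SF); rewrite inE => /eqP.
exists f, S; split=> // [i i' iS Ci' i'S | ].
  by apply: light; rewrite // !inE i'S Ci'.
apply: hom_below_le1 => // i; rewrite count_Hcol UfE.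
by case: (boolP (i \in S)) => [/SC0 -> | _]; rewrite ?addn0 ?C_le1.
Qed.

Lemma count_Hcol_relabel f (s : {perm 'I_d}) k m : dyrestr C k m = set0 ->
  count (Hcol (fun x => (s^-1)%g (f x))) k m =1 count (Hcol f) k m \o s.
Proof.
move=> C0 i; have Ccount0 i0 : count Ccol k m i0 = 0.
  apply/eqP; rewrite cards_eq0 -subset0 -C0 !dyrestrE setSI //.
  exact: colouring_sub Chom.1.
rewrite /= !count_Hcol !Ccount0 !add0n; apply: eq_card => x; rewrite !inE.
by rewrite -(inj_eq (@perm_inj _ s)) permKV.
Qed.

Lemma hom_below_relabel f (s : {perm 'I_d}) k m : dyrestr C k m = set0 ->
  hom_below f k m -> hom_below (fun x => (s^-1)%g (f x)) k m.
Proof.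
move=> C0 hom k' m' le_k' m'_m.
have C0' : dyrestr C k' m' = set0.
  by apply/eqP; rewrite -subset0 -C0 !dyrestrE setIS // dnode_sub.
apply: hom_counts_eq (hom_counts_comp s (hom k' m' le_k' m'_m)) => i.
by rewrite count_Hcol_relabel.
Qed.

Lemma hom_below_glue k m a b fa fb : k < j -> children m a b ->
  hom_below fa k.+1 a -> hom_below fb k.+1 b ->
  hom_counts eta (fun i => count (Hcol fa) k.+1 a i + count (Hcol fb) k.+1 b i) (total k m) ->
  exists f, hom_below f k m.
Proof.
move=> lt_kj ch hom_a hom_b hom_km.
pose f x := if x \in dnode j k.+1 a then fa x else fb x.
have fa_f : {in dyrestr U k.+1 a, fa =1 f}.
  by move=> x; rewrite dyrestrE inE /f => /andP [_ ->].
have fb_f : {in dyrestr U k.+1 b, fb =1 f}.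
  move=> x; rewrite dyrestrE inE /f => /andP [_ xb].
  by rewrite (negbTE (dnode_children_disjoint ch xb)).
exists f; apply: (hom_below_children lt_kj ch);
  [ | exact: hom_below_local fa_f hom_a | exact: hom_below_local fb_f hom_b].
apply: hom_counts_eq hom_km => i.
rewrite (count_Hcol_local fa_f) (count_Hcol_local fb_f).
by rewrite /count (card_dyrestr_children _ lt_kj ch).
Qed.

Lemma hom_below_small_node k m : k <= j -> m < 2 ^ k -> total k m <= d ->
  exists f, hom_below f k m.
Proof.
move=> le_kj lt_m small.
by have [f [_ [_ _ _ hom]]] := small_node_colouring (fun=> 0) le_kj lt_m small; exists f.
Qed.

Lemma hom_below_big_big k m a b fa fb : k < j -> children m a b ->
  hom_below fa k.+1 a -> hom_below fb k.+1 b -> d < total k.+1 a -> d < total k.+1 b ->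
  exists f, hom_below f k m.
Proof.
move=> lt_kj ch hom_a hom_b big_a big_b; apply: (hom_below_glue lt_kj ch hom_a hom_b).
left; split; first by rewrite (total_children lt_kj ch); lia.
by apply: balancedD; apply: hom_below_balanced.
Qed.

(* Colour [b] first, using the [C]-counts of [a] as weights, then colour [a]
   using the resulting counts of [b].  If some colour were missing from the
   whole node, the greedy choices would force every colour to occur at most
   once in it, contradicting [d < total k m]. *)
Lemma hom_below_small_small k m a b : k < j -> m < 2 ^ k -> children m a b ->
  total k.+1 a <= d -> total k.+1 b <= d -> d < total k m ->
  exists f, hom_below f k m.
Proof.
move=> lt_kj lt_m ch small_a small_b big; have [lt_a lt_b] := children_lt lt_m ch.
have [fb [SB [SB_C0 UbE lightB hom_b]]] :=
  small_node_colouring (count Ccol k.+1 a) lt_kj lt_b small_b.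
have [fa [SA [SA_C0 UaE lightA hom_a]]] :=
  small_node_colouring (count (Hcol fb) k.+1 b) lt_kj lt_a small_a.
apply: (hom_below_glue lt_kj ch hom_a hom_b); left; split=> //.
apply: (balanced_le2 eta_gt0 eta_le_half) => i; apply/andP; split; last first.
  by have := hom_below_count_le1 lt_kj hom_a small_a i;
    have := hom_below_count_le1 lt_kj hom_b small_b i; lia.
rewrite lt0n; apply/negP => /eqP zero_i.
have := zero_i; rewrite !count_Hcol UaE UbE.
case: (boolP (i \in SA)) => iSA; case: (boolP (i \in SB)) => iSB; rewrite ?addn1 ?addnS //.
rewrite !addn0 => /eqP; rewrite addn_eq0 => /andP [/eqP Ca_i /eqP Cb_i].
have Hb0 i0 : i0 \in SA -> count (Hcol fb) k.+1 b i0 = 0.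
  move=> i0SA; have := lightA i0 i i0SA Ca_i iSA.
  by rewrite [X in _ <= X]count_Hcol Cb_i UbE (negbTE iSB); lia.
have Ca0 i0 : i0 \in SB -> count Ccol k.+1 a i0 = 0.
  by move=> i0SB; have := lightB i0 i i0SB Cb_i iSB; rewrite Ca_i; lia.
have countC i0 : count Ccol k m i0 = count Ccol k.+1 a i0 + count Ccol k.+1 b i0.
  exact: card_dyrestr_children.
have C_le1 i0 : count Ccol k m i0 <= 1.
  case: (hom_at_C (ltnW lt_kj) lt_m) => [[bigC balC] | [_ //]].
  have := balanced_gt0 eta_gt0 _ balC i; rewrite sum_count_Ccol countC Ca_i Cb_i.
  by move=> /(_ (leq_ltn_trans (leq0n d) bigC)).
have H_le1 i0 : count (Hcol fa) k.+1 a i0 + count (Hcol fb) k.+1 b i0 <= 1.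
  have := C_le1 i0; rewrite countC.
  case: (boolP (i0 \in SA)) => [i0SA | i0SA].
    by have := Hb0 i0 i0SA; rewrite !count_Hcol UaE i0SA SA_C0 //; lia.
  rewrite !count_Hcol UaE UbE (negbTE i0SA).
  case: (boolP (i0 \in SB)) => [i0SB | _]; last by lia.
  by rewrite Ca0 // SB_C0 //; lia.
have := sum_le1_lt_card H_le1 zero_i.
by rewrite big_split /= !sum_count_Hcol card_ord -(total_children lt_kj ch); lia.
Qed.

Lemma hom_below_full_big k m a b fb : k < j -> m < 2 ^ k -> children m a b ->
  hom_below fb k.+1 b -> total k.+1 a = d -> d < total k.+1 b ->
  exists f, hom_below f k m.
Proof.
move=> lt_kj lt_m ch hom_b full_a big_b; have [lt_a _] := children_lt lt_m ch.
have [fa [_ [_ _ _ hom_a]]] :=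
  small_node_colouring (fun=> 0) lt_kj lt_a (eq_leq full_a).
have Ha_le1 := hom_below_count_le1 lt_kj hom_a (eq_leq full_a).
have Ha1 i : count (Hcol fa) k.+1 a i = 1.
  have := Ha_le1 i; case: ltngtP => // /ltnSE; rewrite leqn0 => /eqP Ha0.
  by have := sum_le1_lt_card Ha_le1 Ha0; rewrite sum_count_Hcol full_a card_ord ltnn.
apply: (hom_below_glue lt_kj ch hom_a hom_b); left.
split; first by rewrite (total_children lt_kj ch); lia.
have := balanced_add1 eta_le_half (hom_below_balanced lt_kj hom_b big_b).
by move=> bal i i' /=; rewrite !Ha1; apply: bal.
Qed.

Lemma hom_below_small_big_noU k m a b fb : k < j -> m < 2 ^ k -> children m a b ->
  dyrestr U k.+1 b = set0 -> hom_below fb k.+1 b ->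
  total k.+1 a <= d -> d < total k.+1 b -> exists f, hom_below f k m.
Proof.
move=> lt_kj lt_m ch U0 hom_b small_a big_b; have [lt_a lt_b] := children_lt lt_m ch.
have countC i : count Ccol k m i = count Ccol k.+1 a i + count Ccol k.+1 b i.
  exact: card_dyrestr_children.
have Hb i : count (Hcol fb) k.+1 b i = count Ccol k.+1 b i.
  by rewrite count_Hcol count_Ucol_eq0 ?addn0.
have totalCb : total k.+1 b = #|dyrestr C k.+1 b| by rewrite total_split U0 cards0 addn0.
have [[_ balC] | [small_C _]] := hom_at_C (ltnW lt_kj) lt_m; last first.
  by move: small_C big_b; rewrite (card_dyrestr_children _ lt_kj ch) totalCb; lia.
have [[_ balCb] | [small_Cb _]] := hom_at_C lt_kj lt_b; last first.
  by move: small_Cb; rewrite -totalCb; lia.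
have Cb_gt0 := balanced_gt0 eta_gt0 _ balCb; rewrite sum_count_Ccol -totalCb in Cb_gt0.
have [fa [S [S0 UaE light hom_a]]] :=
  small_node_colouring (count Ccol k.+1 b) lt_kj lt_a small_a.
apply: (hom_below_glue lt_kj ch hom_a hom_b); left.
split; first by rewrite (total_children lt_kj ch); lia.
have bal : balanced eta (fun i => count Ccol k.+1 a i + (i \in S) + count Ccol k.+1 b i).
  apply: balancedD_light => //.
  - by move=> i; case: (i \in S).
  - by move=> i; case: (boolP (i \in S)) => // /S0.
  - move=> i i'; case: (boolP (i \in S)); case: (boolP (i' \in S)) => //= i'S iS _ Ci' _.
    exact: light.
  - by move=> i i' /=; rewrite -!countC; apply: balC.
  - by move=> i; apply: Cb_gt0; lia.
by move=> i i' /=; rewrite !Hb !count_Hcol !UaE; apply: bal.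
Qed.

Lemma hom_below_small_big_noC k m a b fb : k < j -> m < 2 ^ k -> children m a b ->
  dyrestr C k.+1 b = set0 -> hom_below fb k.+1 b ->
  total k.+1 a <= d -> d < total k.+1 b -> exists f, hom_below f k m.
Proof.
move=> lt_kj lt_m ch C0 hom_b small_a big_b; have [lt_a lt_b] := children_lt lt_m ch.
have [fa [_ [_ _ _ hom_a]]] := small_node_colouring (fun=> 0) lt_kj lt_a small_a.
have Ha_le1 := hom_below_count_le1 lt_kj hom_a small_a.
have balb := hom_below_balanced lt_kj hom_b big_b.
have Hb_gt0 := balanced_gt0 eta_gt0 _ balb; rewrite sum_count_Hcol in Hb_gt0.
set X := [set i | count (Hcol fa) k.+1 a i == 1].
have le_XT : #|X| <= #|[set: 'I_d]| by rewrite cardsT max_card.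
have [S [_ cardS light]] := lightest_subset (count (Hcol fb) k.+1 b) le_XT.
have [s sX] := exists_perm_imset (esym cardS).
have inS i : (s i \in S) = (i \in X) by rewrite -sX mem_imset //; apply: perm_inj.
apply: (hom_below_glue lt_kj ch hom_a (hom_below_relabel s C0 hom_b)); left.
split; first by rewrite (total_children lt_kj ch); lia.
have bal : balanced eta
    (fun i => 0 + count (Hcol fa) k.+1 a i + count (Hcol fb) k.+1 b (s i)).
  apply: balancedD_light => //.
  - move=> i1 i2 Ha1 _ Ha2; apply: light; first by rewrite inS inE Ha1.
    by rewrite !inE inS inE Ha2.
  - by move=> i1 i2; apply: balb.
  - by move=> i1; apply: Hb_gt0; lia.
move=> i i' /=; rewrite !count_Hcol_relabel //.
by have := bal i i'; rewrite /= !add0n.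
Qed.

Lemma hom_below_small_big k m a b fb : k < j -> m < 2 ^ k -> children m a b ->
  hom_below fb k.+1 b -> total k.+1 a <= d -> d < total k.+1 b ->
  exists f, hom_below f k m.
Proof.
move=> lt_kj lt_m ch hom_b small_a big_b.
have [lt_ad | full_a] := ltnP (total k.+1 a) d; last first.
  have full : total k.+1 a = d by apply/eqP; rewrite eqn_leq small_a.
  exact: (hom_below_full_big lt_kj lt_m ch hom_b full big_b).
have lt_ad' : #|dyrestr (U :|: C) k.+1 a| < d by rewrite setUC.
have le_db' : d <= #|dyrestr (U :|: C) k.+1 b| by rewrite setUC ltnW.
have [U0 | C0] := prev lt_kj lt_m ch lt_ad' le_db'.
- exact: (hom_below_small_big_noU lt_kj lt_m ch U0 hom_b small_a big_b).
- exact: (hom_below_small_big_noC lt_kj lt_m ch C0 hom_b small_a big_b).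
Qed.

Lemma hom_below_exists k m : k <= j -> m < 2 ^ k -> exists f, hom_below f k m.
Proof.
move=> le_kj; have [t jkt] : exists t, j - k = t by eexists.
elim: t k m le_kj jkt => [|t IH] k m le_kj jkt lt_m.
  have jk : k = j by lia.
  apply: hom_below_small_node => //; apply: leq_trans d_gt0.
  rewrite /total dyrestrE jk; apply: leq_trans (card_dnode_leaf j m).
  exact/subset_leq_card/subsetIr.
have lt_kj : k < j by lia.
have IHc m' : m' < 2 ^ k.+1 -> exists f, hom_below f k.+1 m' by apply: IH; lia.
have [small | big] := leqP (total k m) d; first exact: hom_below_small_node.
have ch : children m m.*2 m.*2.+1 by left.
have [lt_a lt_b] := children_lt lt_m ch.
have [small_a | big_a] := leqP (total k.+1 m.*2) d;
  have [small_b | big_b] := leqP (total k.+1 m.*2.+1) d.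
- exact: hom_below_small_small lt_kj lt_m ch small_a small_b big.
- have [fb hom_b] := IHc _ lt_b.
  exact: hom_below_small_big lt_kj lt_m ch hom_b small_a big_b.
- have [fa hom_a] := IHc _ lt_a.
  exact: hom_below_small_big lt_kj lt_m (children_sym ch) hom_a small_b big_a.
- have [fa hom_a] := IHc _ lt_a; have [fb hom_b] := IHc _ lt_b.
  exact: hom_below_big_big lt_kj ch hom_a hom_b big_a big_b.
Qed.

End Extension.

Local Open Scope ring_scope.

Theorem theorem2p1 (R : realFieldType) (d : nat) (eta : R) (j : nat)
    (C : {set 'I_(2^j)}) (Ccol : 'I_d -> {set 'I_(2^j)})
    (U : {set 'I_(2^j)}) :
  (0 < d)%N -> 0 < eta -> eta <= 1 / 2 ->
  homogeneous_colouring eta C Ccol ->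
  U :&: C = set0 ->
  previsible d C U ->
  exists Ucol : 'I_d -> {set 'I_(2^j)},
    colouring U Ucol /\
    homogeneous_colouring eta (C :|: U) (fun i => Ccol i :|: Ucol i).
Proof.
move=> d_gt0 eta_gt0 eta_le_half Chom UC0 prev.
have [f hom] := hom_below_exists d_gt0 eta_gt0 eta_le_half Chom UC0 prev (leq0n j) (ltn0Sn 0).
exists (Ucol U f); split; first exact: colouring_fibres.
apply/(homogeneous_colouringP d_gt0 eta_gt0); split; first exact: (Hcol_colouring Chom UC0 f).
by move=> k m le_kj lt_m; apply: hom => //; rewrite subn0 divn_small.
Qed.
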